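(* Let $a,b>0$, $\chi_1,\chi_2\ge0$, $\lambda_1,\lambda_2,\mu_1,\mu_2>0$ with $b+\chi_2\mu_2>\chi_1\mu_1+M$. Let $0<\mu<\min\{1,\sqrt{\lambda_1/a},\sqrt{\lambda_2/a}\}$, $\tilde\mu\in(\mu,\min\{1,2\mu,\sqrt{\lambda_1/a},\sqrt{\lambda_2/a}\})$, $d>1$, and $u\in\mathcal E_\mu$. Then for every $x\in\mathbb R$, writing $\Phi=(\chi_2\lambda_2V_2-\chi_1\lambda_1V_1)(x;u)$, $\sigma=\chi_2\mu_2\lambda_2-\chi_1\mu_1\lambda_1$, $\varphi=\varphi_\mu(x)$, $$\Phi\le\min\Big\{(\sigma)_+\min\{\tfrac{C_0}{\lambda_2},\tfrac{\varphi}{\lambda_2-a\mu^2}\}+\chi_1\mu_1\lambda_1\min\{\tfrac{C_0(\lambda_1-\lambda_2)_+}{\lambda_1\lambda_2},\tfrac{\varphi(\lambda_1-\lambda_2)_+}{(\lambda_1-a\mu^2)(\lambda_2-a\mu^2)}\},\ (\sigma)_+\min\{\tfrac{C_0}{\lambda_1},\tfrac{\varphi}{\lambda_1-a\mu^2}\}+\chi_2\mu_2\lambda_2\min\{\tfrac{C_0(\lambda_1-\lambda_2)_+}{\lambda_1\lambda_2},\tfrac{\varphi(\lambda_1-\lambda_2)_+}{(\lambda_1-a\mu^2)(\lambda_2-a\mu^2)}\}\Big\}$$ and $$\Phi\ge\max\Big\{-(\sigma)_-\min\{\tfrac{C_0}{\lambda_2},\tfrac{\varphi}{\lambda_2-a\mu^2}\}-\chi_1\mu_1\lambda_1\min\{\tfrac{C_0(\lambda_1-\lambda_2)_-}{\lambda_1\lambda_2},\tfrac{\varphi(\lambda_1-\lambda_2)_-}{(\lambda_1-a\mu^2)(\lambda_2-a\mu^2)}\},\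 -(\sigma)_-\min\{\tfrac{C_0}{\lambda_1},\tfrac{\varphi}{\lambda_1-a\mu^2}\}-\chi_2\mu_2\lambda_2\min\{\tfrac{C_0(\lambda_1-\lambda_2)_-}{\lambda_1\lambda_2},\tfrac{\varphi(\lambda_1-\lambda_2)_-}{(\lambda_1-a\mu^2)(\lambda_2-a\mu^2)}\}\Big\}.$$
   Context: $(r)_+=\max\{r,0\}$, $(r)_-=\max\{-r,0\}$. $M=\min\{\frac{(\chi_2\mu_2\lambda_2-\chi_1\mu_1\lambda_1)_++\chi_1\mu_1(\lambda_1-\lambda_2)_+}{\lambda_2},\frac{\chi_2\mu_2(\lambda_1-\lambda_2)_++(\chi_2\mu_2\lambda_2-\chi_1\mu_1\lambda_1)_+}{\lambda_1}\}$, $C_0=\frac{a}{b+\chi_2\mu_2-\chi_1\mu_1-M}$, $\varphi_\mu(x)=e^{-\sqrt a\mu x}$, $U^+_\mu=\min\{C_0,\varphi_\mu\}$, $U^-_\mu=\max\{0,\varphi_\mu-d\varphi_{\tilde\mu}\}$, $\mathcal E_\mu=\{u\in C^b_{\rm unif}(\mathbb R): U^-_\mu\le u\le U^+_\mu\}$ where $C^b_{\rm unif}(\mathbb R)$ is the space of bounded uniformly continuous functions. For $i=1,2$, $V_i(x;u)=\mu_i\int_0^\infty\int_{\mathbb R}\frac{e^{-\lambda_i s}}{\sqrt{4\pi s}}e^{-\frac{|x-z|^2}{4s}}u(z)\,dz\,ds$. *)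

From HB Require Import structures.
From mathcomp Require Import all_boot all_order all_algebra.
From mathcomp Require Import all_classical all_reals all_analysis.
Set Implicit Arguments. Unset Strict Implicit. Unset Printing Implicit Defensive.
Import Order.TTheory GRing.Theory Num.Theory.
Import numFieldNormedType.Exports.
Local Open Scope classical_set_scope.
Local Open Scope ring_scope.

Section Defs.
Variable R : realType.

Definition ppart (r : R) : R := Num.max r 0.
Definition npart (r : R) : R := Num.max (- r) 0.

Definition Mconst (chi1 chi2 mu1 mu2 l1 l2 : R) : R :=
  Num.min
    ((ppart (chi2 * mu2 * l2 - chi1 * mu1 * l1) + chi1 * mu1 * ppart (l1 - l2)) / l2)
    ((chi2 * mu2 * ppart (l1 - l2) + ppart (chi2 * mu2 * l2 - chi1 * mu1 * l1)) / l1).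

Definition C0 (a b chi1 chi2 mu1 mu2 l1 l2 : R) : R :=
  a / (b + chi2 * mu2 - chi1 * mu1 - Mconst chi1 chi2 mu1 mu2 l1 l2).

Definition varphi (a mu x : R) : R := expR (- (Num.sqrt a * mu * x)).

Definition Uplus (a b chi1 chi2 mu1 mu2 l1 l2 mu : R) (x : R) : R :=
  Num.min (C0 a b chi1 chi2 mu1 mu2 l1 l2) (varphi a mu x).

Definition Uminus (a mu mut d : R) (x : R) : R :=
  Num.max 0 (varphi a mu x - d * varphi a mut x).

Definition bdd_unif_cont (u : R -> R) : Prop :=
  (exists B : R, forall x, `|u x| <= B) /\
  (forall e : R, 0 < e -> exists2 del : R, 0 < del &
      forall x y : R, `|x - y| < del -> `|u x - u y| < e).

Definition in_E (a b chi1 chi2 mu1 mu2 l1 l2 mu mut d : R) (u : R -> R) : Prop :=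
  bdd_unif_cont u /\
  forall x, Uminus a mu mut d x <= u x /\ u x <= Uplus a b chi1 chi2 mu1 mu2 l1 l2 mu x.

Definition kern (l x s z : R) : R :=
  expR (- (l * s)) / Num.sqrt (4 * pi * s) * expR (- ((x - z) ^+ 2 / (4 * s))).

Definition Vop (l mui : R) (u : R -> R) (x : R) : R :=
  mui * fine (\int[lebesgue_measure]_(s in `]0%R, +oo[)
                 (\int[lebesgue_measure]_(z in [set: R]) (kern l x s z * u z)%:E))%E.

End Defs.

From HB Require Import structures.
From mathcomp Require Import all_boot all_order all_algebra.
From mathcomp Require Import all_classical all_reals all_analysis.
From mathcomp Require Import measurable_realfun ring lra.
Set Implicit Arguments. Unset Strict Implicit.
Import Order.TTheory GRing.Theory Num.Theory.
Import numFieldNormedType.Exports.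
Local Open Scope ring_scope.
Local Open Scope classical_set_scope.

(* With [H s := (e^{s Delta} u)(x)], each [V_i(x;u)] is [mu_i] times the Laplace
   transform of [H] at [lambda_i]. A Gaussian computation turns [0 <= u <= C_0] and
   [u z <= e^{-sqrt a mu z}] into [0 <= H s <= min (C_0, phi_mu(x) e^{a mu^2 s})].
   Integrating these envelopes against [e^{-lambda s}] bounds [J_i := V_i/mu_i], and
   against [e^{-lambda_2 s} - e^{-lambda_1 s}] (of constant sign) bounds [J_2 - J_1].
   Finally [Phi = sigma J_2 + chi_1 mu_1 lambda_1 (J_2 - J_1)
               = sigma J_1 + chi_2 mu_2 lambda_2 (J_2 - J_1)]. *)

Section positive_part.
Variable R : realType.
Implicit Types r : R.

Lemma ger0_ppart r : 0 <= r -> ppart r = r.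
Proof. exact/max_idPl. Qed.

Lemma ler0_ppart r : r <= 0 -> ppart r = 0.
Proof. exact/max_idPr. Qed.

Lemma ppart_ge0 r : 0 <= ppart r.
Proof. by rewrite le_max lexx orbT. Qed.

Lemma ppart_ge r : r <= ppart r.
Proof. by rewrite le_max lexx. Qed.

Lemma npartE r : npart r = ppart (- r).
Proof. by []. Qed.

End positive_part.

Lemma ge0_integralD_le d (T : measurableType d) (R : realType)
    (mu : {measure set T -> \bar R}) (D : set T) (f1 f2 g1 g2 : T -> R) :
  measurable D ->
  measurable_fun D (EFin \o f1) -> measurable_fun D (EFin \o f2) ->
  measurable_fun D (EFin \o g1) -> measurable_fun D (EFin \o g2) ->
  (forall x, D x -> 0 <= f1 x) -> (forall x, D x -> 0 <= f2 x) ->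
  (forall x, D x -> 0 <= g1 x) -> (forall x, D x -> 0 <= g2 x) ->
  (forall x, D x -> f1 x + f2 x <= g1 x + g2 x) ->
  (\int[mu]_(x in D) (f1 x)%:E + \int[mu]_(x in D) (f2 x)%:E <=
   \int[mu]_(x in D) (g1 x)%:E + \int[mu]_(x in D) (g2 x)%:E)%E.
Proof.
move=> mD mf1 mf2 mg1 mg2 f10 f20 g10 g20 fg.
have ge0E f : (forall x, D x -> 0 <= f x) -> forall x, D x -> (0 <= (f x)%:E)%E.
  by move=> f0 x Dx; rewrite lee_fin f0.
rewrite -!ge0_integralD ?ge0E //; apply: ge0_le_integral.
- exact: mD.
- by move=> x Dx; rewrite adde_ge0 ?ge0E.
- exact: emeasurable_funD.
- exact: emeasurable_funD.
- by move=> x Dx; rewrite -!EFinD lee_fin fg.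
Qed.

Section laplace_transform.
Variable R : realType.
Implicit Types (c k p q : R) (f g : R -> R).

Definition laplace p f : \bar R :=
  (\int[lebesgue_measure]_(s in `]0%R, +oo[) (expR (- (p * s)) * f s)%:E)%E.

Lemma measurable_expRNM c : measurable_fun [set: R] (fun s => expR (- (c * s))).
Proof. by apply: measurableT_comp => //; apply: measurable_funN; apply: measurable_funM. Qed.

Lemma integral_expRNM c : 0 < c ->
  (\int[lebesgue_measure]_(s in `]0%R, +oo[) (expR (- (c * s)))%:E)%E = (c^-1)%:E.
Proof.
move=> c0.
have me : measurable_fun [set: R] (fun s : R => (expR (- (c * s)))%:E).
  by apply/measurable_EFinP; exact: measurable_expRNM.
rewrite integral_itv_obnd_cbnd; last exact: measurable_funTS me.
have : (c%:E * \int[lebesgue_measure]_(s in `[0%R, +oo[) (expR (- (c * s)))%:E = 1)%E.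
  rewrite -ge0_integralZl ?lee_fin ?(ltW c0) //.
  - rewrite -(integral_exponential_pdf c0) integral_mkcond.
    apply: eq_integral => s _; rewrite /exponential_pdf !patchE.
    by case: ifP => _ //; rewrite EFinM mulNr.
  - exact: measurable_funTS me.
have : (0 <= \int[lebesgue_measure]_(s in `[0%R, +oo[) (expR (- (c * s)))%:E)%E.
  by apply: integral_ge0 => s _; rewrite lee_fin expR_ge0.
case: (\int[_]_(_ in _) _)%E => [r _ | _ | //].
- rewrite -EFinM => -[crE]; congr EFin.
  by rewrite -[c^-1]mulr1 -crE mulKf ?gt_eqF.
- by rewrite gt0_muley ?lte_fin.
Qed.

Lemma measurable_laplace_integrand p f : measurable_fun [set: R] f ->
  measurable_fun (`]0%R, +oo[ : set R) (fun s => (expR (- (p * s)) * f s)%:E).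
Proof.
move=> mf; apply/measurable_EFinP/measurable_funTS/measurable_funM => //.
exact: measurable_expRNM.
Qed.

Lemma laplace_expR k q p : 0 <= k -> q < p ->
  laplace p (fun s => k * expR (q * s)) = (k / (p - q))%:E.
Proof.
move=> k0 qp; rewrite /laplace.
under eq_integral => s _.
  rewrite mulrCA -expRD (_ : - (p * s) + q * s = - ((p - q) * s)); last by ring.
  rewrite EFinM; over.
rewrite ge0_integralZl ?integral_expRNM ?subr_gt0 //.
by apply/measurable_EFinP; exact: measurable_funTS (measurable_expRNM _).
Qed.

Variable h : R -> R.
Hypotheses (mh : measurable_fun [set: R] h) (h_ge0 : forall s, 0 < s -> 0 <= h s).

Let laplace_integrand_ge0 p f : (forall s, 0 < s -> 0 <= f s) ->
  forall s, `]0%R, +oo[ s -> 0 <= expR (- (p * s)) * f s.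
Proof. by move=> f0 s; rewrite /= in_itv /= andbT => s0; rewrite mulr_ge0 ?expR_ge0 ?f0. Qed.

Let measurable_exp_envelope k r : measurable_fun [set: R] (fun s => k * expR (r * s)).
Proof. by apply: measurable_funM => //; apply: measurableT_comp => //; apply: measurable_funM. Qed.

Lemma laplace_ge0 p : (0 <= laplace p h)%E.
Proof. by apply: integral_ge0 => s s0; rewrite lee_fin laplace_integrand_ge0. Qed.

Lemma le_laplace g p : measurable_fun [set: R] g -> (forall s, 0 < s -> h s <= g s) ->
  (laplace p h <= laplace p g)%E.
Proof.
move=> mg hg; apply: ge0_le_integral => //.
- by move=> s s0; rewrite lee_fin laplace_integrand_ge0.
- exact: measurable_laplace_integrand.
- exact: measurable_laplace_integrand.
- by move=> s; rewrite /= in_itv /= andbT => s0; rewrite lee_fin ler_wpM2l ?expR_ge0 ?hg.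
Qed.

Lemma laplace_antitone p p' : p' <= p -> (laplace p h <= laplace p' h)%E.
Proof.
move=> pp'; apply: ge0_le_integral => //.
- by move=> s s0; rewrite lee_fin laplace_integrand_ge0.
- exact: measurable_laplace_integrand.
- exact: measurable_laplace_integrand.
move=> s; rewrite /= in_itv /= andbT => s0.
by rewrite lee_fin ler_wpM2r ?h_ge0 // ler_expR lerN2 ler_wpM2r // ltW.
Qed.

Lemma laplace_sub_le g p p' : measurable_fun [set: R] g -> (forall s, 0 < s -> h s <= g s) ->
  p <= p' -> (laplace p h + laplace p' g <= laplace p g + laplace p' h)%E.
Proof.
move=> mg hg pp'.
have g_ge0 s : 0 < s -> 0 <= g s by move=> s0; exact: le_trans (h_ge0 s0) (hg s s0).
apply: ge0_integralD_le => //; try exact: measurable_laplace_integrand;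
  try exact: laplace_integrand_ge0.
move=> s; rewrite /= in_itv /= andbT => s0.
(* pointwise, (e^{-p s} - e^{-p' s}) (g s - h s) >= 0 *)
have e12 : expR (- (p' * s)) <= expR (- (p * s)) by rewrite ler_expR lerN2 ler_wpM2r // ltW.
have := hg s s0; nra.
Qed.

Section exponential_envelope.
Variables (k r : R).
Hypothesis h_env : forall s, 0 < s -> h s <= k * expR (r * s).

Let k_ge0 : 0 <= k.
Proof. by have := le_trans (h_ge0 ltr01) (h_env ltr01); rewrite pmulr_lge0 ?expR_gt0. Qed.

Lemma laplace_le_envelope p : r < p -> (laplace p h <= (k / (p - r))%:E)%E.
Proof. by move=> rp; rewrite -laplace_expR //; exact: le_laplace. Qed.

Lemma laplace_fin_num p : r < p -> laplace p h \is a fin_num.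
Proof.
move=> rp; rewrite ge0_fin_numE ?laplace_ge0 //.
by rewrite (le_lt_trans (laplace_le_envelope rp)) ?ltry.
Qed.

Lemma laplace_sub_le_envelope p p' : r < p -> p <= p' ->
  fine (laplace p h) - fine (laplace p' h) <= k / (p - r) - k / (p' - r).
Proof.
move=> rp pp'; have rp' := lt_le_trans rp pp'.
have := laplace_sub_le (measurable_exp_envelope k r) h_env pp'.
rewrite !laplace_expR // -(fineK (laplace_fin_num rp)) -(fineK (laplace_fin_num rp')).
by rewrite -!EFinD lee_fin; lra.
Qed.

End exponential_envelope.

Let constant_envelope C : (forall s, 0 < s -> h s <= C) ->
  forall s, 0 < s -> h s <= C * expR (0 * s).
Proof. by move=> hC s; rewrite mul0r expR0 mulr1; exact: hC. Qed.

Lemma laplace_bounds C P q p : 0 < p -> q < p ->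
  (forall s, 0 < s -> h s <= C) -> (forall s, 0 < s -> h s <= P * expR (q * s)) ->
  0 <= fine (laplace p h) /\ fine (laplace p h) <= Num.min (C / p) (P / (p - q)).
Proof.
move=> p0 qp hC hP; have hC0 := constant_envelope hC.
split; first by rewrite fine_ge0 ?laplace_ge0.
rewrite le_min -!lee_fin (fineK (laplace_fin_num hP qp)) laplace_le_envelope // andbT.
by have := laplace_le_envelope hC0 p0; rewrite subr0.
Qed.

Lemma laplace_sub_bounds C P q p p' : 0 < p -> 0 < p' -> q < p -> q < p' ->
  (forall s, 0 < s -> h s <= C) -> (forall s, 0 < s -> h s <= P * expR (q * s)) ->
  fine (laplace p h) - fine (laplace p' h) <=
  Num.min (C * ppart (p' - p) / (p' * p)) (P * ppart (p' - p) / ((p' - q) * (p - q))).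
Proof.
move=> p0 p'0 qp qp' hC hP; have hC0 := constant_envelope hC.
have [pp'|p'p] := leP p p'.
  have eC : C * (p' - p) / (p' * p) = C / (p - 0) - C / (p' - 0).
    by rewrite !subr0; field; rewrite !gt_eqF.
  have eP : P * (p' - p) / ((p' - q) * (p - q)) = P / (p - q) - P / (p' - q).
    by field; rewrite !gt_eqF ?subr_gt0.
  rewrite ger0_ppart ?subr_ge0 // le_min eC eP.
  by rewrite (laplace_sub_le_envelope hC0 p0 pp') (laplace_sub_le_envelope hP qp pp').
rewrite ler0_ppart; last by rewrite subr_le0 ltW.
rewrite !mulr0 !mul0r minxx subr_le0.
by rewrite fine_le ?(laplace_fin_num hP) // laplace_antitone // ltW.
Qed.

End laplace_transform.

Lemma measurable_inv (R : realType) : measurable_fun [set: R] (@GRing.inv R).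
Proof.
rewrite -(setUv [set 0]); apply/measurable_funU => //; first exact: measurableC.
split; first exact: measurable_fun_set1.
apply: open_continuous_measurable_fun.
  apply: closed_openC; apply: accessible_closed_set1.
  exact: hausdorff_accessible (@Rhausdorff R).
by move=> x /set_mem x0; apply: inv_continuous; exact/eqP.
Qed.

Section heat_kernel.
Variable R : realType.
Implicit Types (c l m s x z : R) (u v : R -> R).

Lemma kern_ge0 l x s z : 0 <= kern l x s z.
Proof. by rewrite /kern !mulr_ge0 ?expR_ge0 ?invr_ge0 ?sqrtr_ge0. Qed.

Lemma kernE l x s z : kern l x s z = expR (- (l * s)) * kern 0 x s z.
Proof. by rewrite /kern mul0r oppr0 expR0 mul1r !mulrA. Qed.

Lemma measurable_kern_pair l x :
  measurable_fun [set: R * R] (fun p : R * R => kern l x p.1 p.2).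
Proof.
apply: measurable_funM; [apply: measurable_funM|].
- by apply: measurableT_comp => //; apply: measurable_funN; apply: measurable_funM.
- apply: measurableT_comp; first exact: measurable_inv.
  apply: measurableT_comp; first exact: continuous_measurable_fun (@sqrt_continuous R).
  exact: measurable_funM.
- apply: measurableT_comp => //; apply: measurable_funN; apply: measurable_funM.
    by apply: measurable_funX; apply: measurable_funB.
  by apply: measurableT_comp; [exact: measurable_inv | exact: measurable_funM].
Qed.

Lemma measurable_kern l x s : measurable_fun [set: R] (kern l x s).
Proof. exact: measurable_fun_pair2 (measurable_kern_pair l x). Qed.

(* Completing the square: the heat kernel against [e^{-m z}] is a Gaussian density
   centred at [x - 2 m s]. *)
Lemma kern0_expR s x z m : 0 < s ->
  kern 0 x s z * expR (- (m * z)) =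
  expR (- (m * x)) * expR (m ^+ 2 * s) * normal_pdf (x - 2 * m * s) (Num.sqrt (2 * s)) z.
Proof.
move=> s0; have s2 : Num.sqrt (2 * s) ^+ 2 = 2 * s by rewrite sqr_sqrtr // mulr_ge0 // ltW.
rewrite /normal_pdf ifF; last by apply/negbTE; rewrite gt_eqF // sqrtr_gt0 mulr_gt0.
rewrite /kern /normal_peak /normal_fun s2 mul0r oppr0 expR0 mul1r.
have -> : 2 * s * pi *+ 2 = 4 * pi * s by rewrite -mulr_natr; ring.
rewrite -mulrA -expRD -expRD mulrCA -expRD; congr (_ * expR _).
by rewrite -mulr_natr; field; rewrite gt_eqF.
Qed.

Definition heat u s x : \bar R :=
  (\int[lebesgue_measure]_(z in [set: R]) (kern 0 x s z * u z)%:E)%E.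

Lemma heat_expR m s x : 0 < s ->
  heat (fun z => expR (- (m * z))) s x = (expR (- (m * x)) * expR (m ^+ 2 * s))%:E.
Proof.
move=> s0; rewrite /heat.
under eq_integral do rewrite kern0_expR // EFinM.
by rewrite integralZl ?integral_normal_pdf ?mule1 //; exact: integrable_normal_pdf.
Qed.

Lemma heat_one s x : 0 < s -> heat (fun=> 1) s x = 1%E.
Proof.
move=> s0; have := heat_expR 0 x s0.
rewrite expr0n /= !mul0r oppr0 expR0 mulr1 => <-.
by congr heat; apply/funext => z; rewrite mul0r oppr0 expR0.
Qed.

Lemma heat_cst c s x : 0 <= c -> 0 < s -> heat (fun=> c) s x = c%:E.
Proof.
move=> c0 s0; rewrite -[c%:E]mule1 -(heat_one x s0) /heat -ge0_integralZl //.
- by apply: eq_integral => z _; rewrite mulr1 -EFinM mulrC.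
- by apply/measurable_EFinP; apply: measurable_funM => //; exact: measurable_kern.
- by move=> z _; rewrite lee_fin mulr1 kern_ge0.
Qed.

Section heat_bounds.
Variables (u : R -> R) (C m : R).
Hypotheses (meas_u : measurable_fun [set: R] u) (u_ge0 : forall z, 0 <= u z).
Hypotheses (u_leC : forall z, u z <= C) (u_le_expR : forall z, u z <= expR (- (m * z))).

Lemma heat_ge0 s x : (0 <= heat u s x)%E.
Proof. by apply: integral_ge0 => z _; rewrite lee_fin mulr_ge0 ?kern_ge0. Qed.

Lemma le_heat v s x : measurable_fun [set: R] v -> (forall z, u z <= v z) ->
  (heat u s x <= heat v s x)%E.
Proof.
move=> mv uv; apply: ge0_le_integral => //.
- by move=> z _; rewrite lee_fin mulr_ge0 ?kern_ge0.
- by apply/measurable_EFinP; apply: measurable_funM => //; exact: measurable_kern.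
- by apply/measurable_EFinP; apply: measurable_funM => //; exact: measurable_kern.
- by move=> z _; rewrite lee_fin ler_wpM2l ?kern_ge0.
Qed.

Lemma heat_le_cst s x : 0 < s -> (heat u s x <= C%:E)%E.
Proof. by move=> s0; rewrite -(heat_cst x (le_trans (u_ge0 0) (u_leC 0)) s0) le_heat. Qed.

Lemma heat_le_expR s x : 0 < s ->
  (heat u s x <= (expR (- (m * x)) * expR (m ^+ 2 * s))%:E)%E.
Proof. by move=> s0; rewrite -heat_expR // le_heat //; exact: measurable_expRNM. Qed.

Lemma heat_fin_num s x : 0 < s -> heat u s x \is a fin_num.
Proof.
move=> s0; rewrite ge0_fin_numE ?heat_ge0 //.
by rewrite (le_lt_trans (heat_le_cst x s0)) ?ltry.
Qed.

Lemma fine_heat_le_cst s x : 0 < s -> fine (heat u s x) <= C.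
Proof. by move=> s0; rewrite -lee_fin fineK ?heat_fin_num ?heat_le_cst. Qed.

Lemma fine_heat_le_expR s x : 0 < s ->
  fine (heat u s x) <= expR (- (m * x)) * expR (m ^+ 2 * s).
Proof. by move=> s0; rewrite -lee_fin fineK ?heat_fin_num ?heat_le_expR. Qed.

Lemma measurable_fine_heat x : measurable_fun [set: R] (fun s => fine (heat u s x)).
Proof.
apply: measurableT_comp; first exact: fine_measurable.
have mk : measurable_fun [set: R * R] (fun p : R * R => (kern 0 x p.1 p.2 * u p.2)%:E).
  apply/measurable_EFinP; apply: measurable_funM; first exact: measurable_kern_pair.
  exact: measurableT_comp meas_u measurable_snd.
have k_ge0 (p : R * R) : (0 <= (kern 0 x p.1 p.2 * u p.2)%:E)%E.
  by rewrite lee_fin mulr_ge0 ?kern_ge0.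
exact: (measurable_fun_fubini_tonelli_F (m2 := lebesgue_measure) _ mk k_ge0).
Qed.

Lemma Vop_laplace l mui x :
  Vop l mui u x = mui * fine (laplace l (fun s => fine (heat u s x))).
Proof.
rewrite /Vop /laplace; congr (_ * fine _); apply: eq_integral => s.
rewrite inE /= in_itv /= andbT => s0.
under eq_integral do rewrite kernE -mulrA EFinM.
rewrite ge0_integralZl ?lee_fin ?expR_ge0 //.
- by rewrite EFinM (fineK (heat_fin_num x s0)).
- by apply/measurable_EFinP; apply: measurable_funM => //; exact: measurable_kern.
- by move=> z _; rewrite lee_fin mulr_ge0 ?kern_ge0.
Qed.

End heat_bounds.

End heat_kernel.

Lemma continuous_of_unif (R : realType) (u : R -> R) :
  (forall e : R, 0 < e -> exists2 del : R, 0 < del &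
      forall x y : R, `|x - y| < del -> `|u x - u y| < e) -> continuous u.
Proof.
move=> uc x; apply/cvgrPdist_lt => e e0; have [del del0 H] := uc e e0.
by apply/nbhs_ballP; exists del => // y; exact: H.
Qed.

Lemma in_E_bounds (R : realType) (a b chi1 chi2 mu1 mu2 l1 l2 mu mut d : R) (u : R -> R) :
  in_E a b chi1 chi2 mu1 mu2 l1 l2 mu mut d u ->
  [/\ measurable_fun [set: R] u, forall z, 0 <= u z,
      forall z, u z <= C0 a b chi1 chi2 mu1 mu2 l1 l2 & forall z, u z <= varphi a mu z].
Proof.
move=> [[_ uc] uE]; split.
- by apply: continuous_measurable_fun; exact: continuous_of_unif.
- by move=> z; apply: le_trans (proj1 (uE z)); rewrite /Uminus le_max lexx.
- by move=> z; have [_] := uE z; rewrite /Uplus le_min => /andP[].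
- by move=> z; have [_] := uE z; rewrite /Uplus le_min => /andP[].
Qed.

Lemma mul_sqr_lt_of_lt_sqrt_div (R : realType) (a l mu : R) :
  0 < a -> 0 <= mu -> mu < Num.sqrt (l / a) -> a * mu ^+ 2 < l.
Proof.
move=> a0 mu0 hmu; have la0 : 0 < l / a by rewrite -sqrtr_gt0 (le_lt_trans mu0).
by rewrite mulrC -ltr_pdivlMr // -ltr_sqrt // sqrtr_sqr ger0_norm.
Qed.

Section weighted_difference.
Variable R : realType.
Implicit Types r x y : R.

Lemma ler_ppartM r x y : 0 <= x -> x <= y -> r * x <= ppart r * y.
Proof. by move=> x0 xy; have := ppart_ge r; have := ppart_ge0 r; nra. Qed.

Lemma ler_npartM r x y : 0 <= x -> x <= y -> - (npart r * y) <= r * x.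
Proof. by move=> x0 xy; rewrite lerNl -mulNr npartE ler_ppartM. Qed.

Lemma weighted_sub_bounds (al be J1 J2 m1 m2 dP dN : R) :
  0 <= al -> 0 <= be -> 0 <= J1 -> 0 <= J2 -> J1 <= m1 -> J2 <= m2 ->
  J2 - J1 <= dP -> J1 - J2 <= dN ->
  be * J2 - al * J1 <=
    Num.min (ppart (be - al) * m2 + al * dP) (ppart (be - al) * m1 + be * dP) /\
  Num.max (- (npart (be - al) * m2) - al * dN) (- (npart (be - al) * m1) - be * dN) <=
    be * J2 - al * J1.
Proof.
move=> al0 be0 J10 J20 J1m J2m hdP hdN.
have E2 : be * J2 - al * J1 = (be - al) * J2 + al * (J2 - J1) by ring.
have E1 : be * J2 - al * J1 = (be - al) * J1 + be * (J2 - J1) by ring.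
have dN' (c : R) : 0 <= c -> - (c * dN) <= c * (J2 - J1).
  by move=> c0; rewrite -mulrN ler_wpM2l // lerNl opprB.
split; [rewrite le_min | rewrite ge_max]; apply/andP; split.
- by rewrite E2 lerD ?ler_ppartM ?ler_wpM2l.
- by rewrite E1 lerD ?ler_ppartM ?ler_wpM2l.
- by rewrite E2 lerD ?ler_npartM ?dN'.
- by rewrite E1 lerD ?ler_npartM ?dN'.
Qed.

End weighted_difference.

Unset Implicit Arguments.

Theorem lemma2p2 (R : realType) (a b chi1 chi2 l1 l2 mu1 mu2 mu mut d : R)
  (u : R -> R)
  (ha : 0 < a) (hb : 0 < b) (hchi1 : 0 <= chi1) (hchi2 : 0 <= chi2)
  (hl1 : 0 < l1) (hl2 : 0 < l2) (hmu1 : 0 < mu1) (hmu2 : 0 < mu2)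
  (hM : chi1 * mu1 + Mconst chi1 chi2 mu1 mu2 l1 l2 < b + chi2 * mu2)
  (hmu0 : 0 < mu) (hmu_1 : mu < 1)
  (hmu_l1 : mu < Num.sqrt (l1 / a)) (hmu_l2 : mu < Num.sqrt (l2 / a))
  (hmut0 : mu < mut) (hmut_1 : mut < 1) (hmut_2 : mut < 2 * mu)
  (hmut_l1 : mut < Num.sqrt (l1 / a)) (hmut_l2 : mut < Num.sqrt (l2 / a))
  (hd : 1 < d)
  (hu : in_E a b chi1 chi2 mu1 mu2 l1 l2 mu mut d u) :
  forall x : R,
    let Phi := chi2 * l2 * Vop l2 mu2 u x - chi1 * l1 * Vop l1 mu1 u x in
    let sigma := chi2 * mu2 * l2 - chi1 * mu1 * l1 in
    let phi := varphi a mu x in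
    let c0 := C0 a b chi1 chi2 mu1 mu2 l1 l2 in
    Phi <= Num.min
      (ppart sigma * Num.min (c0 / l2) (phi / (l2 - a * mu ^+ 2))
       + chi1 * mu1 * l1 * Num.min (c0 * ppart (l1 - l2) / (l1 * l2))
           (phi * ppart (l1 - l2) / ((l1 - a * mu ^+ 2) * (l2 - a * mu ^+ 2))))
      (ppart sigma * Num.min (c0 / l1) (phi / (l1 - a * mu ^+ 2))
       + chi2 * mu2 * l2 * Num.min (c0 * ppart (l1 - l2) / (l1 * l2))
           (phi * ppart (l1 - l2) / ((l1 - a * mu ^+ 2) * (l2 - a * mu ^+ 2))))
    /\
    Num.max
      (- (npart sigma * Num.min (c0 / l2) (phi / (l2 - a * mu ^+ 2)))
       - chi1 * mu1 * l1 * Num.min (c0 * npart (l1 - l2) / (l1 * l2))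
           (phi * npart (l1 - l2) / ((l1 - a * mu ^+ 2) * (l2 - a * mu ^+ 2))))
      (- (npart sigma * Num.min (c0 / l1) (phi / (l1 - a * mu ^+ 2)))
       - chi2 * mu2 * l2 * Num.min (c0 * npart (l1 - l2) / (l1 * l2))
           (phi * npart (l1 - l2) / ((l1 - a * mu ^+ 2) * (l2 - a * mu ^+ 2))))
    <= Phi.
Proof.
move=> x Phi sigma phi c0.
have [meas_u u_ge0 u_leC u_lephi] := in_E_bounds hu.
set h := fun s => fine (heat u s x).
have mh : measurable_fun [set: R] h by exact: measurable_fine_heat.
have h_ge0 s : 0 < s -> 0 <= h s by move=> _; rewrite fine_ge0 ?heat_ge0.
have h_leC s : 0 < s -> h s <= c0 by move=> s0; exact: fine_heat_le_cst.
have h_lephi s : 0 < s -> h s <= phi * expR (a * mu ^+ 2 * s).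
  move=> s0; rewrite -[a]sqr_sqrtr ?(ltW ha) // -exprMn.
  exact: fine_heat_le_expR.
have q1 := mul_sqr_lt_of_lt_sqrt_div ha (ltW hmu0) hmu_l1.
have q2 := mul_sqr_lt_of_lt_sqrt_div ha (ltW hmu0) hmu_l2.
have [J1_ge0 J1_le] := laplace_bounds mh h_ge0 hl1 q1 h_leC h_lephi.
have [J2_ge0 J2_le] := laplace_bounds mh h_ge0 hl2 q2 h_leC h_lephi.
have dP := laplace_sub_bounds mh h_ge0 hl2 hl1 q2 q1 h_leC h_lephi.
have dN := laplace_sub_bounds mh h_ge0 hl1 hl2 q1 q2 h_leC h_lephi.
rewrite [l2 * l1]mulrC [(l2 - _) * _]mulrC -[l2 - l1]opprB -npartE in dN.
have -> : Phi = chi2 * mu2 * l2 * fine (laplace l2 h) - chi1 * mu1 * l1 * fine (laplace l1 h).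
  by rewrite /Phi !(Vop_laplace meas_u u_ge0 u_leC) -/h; ring.
apply: weighted_sub_bounds => //; exact: mulr_ge0 (mulr_ge0 _ (ltW _)) (ltW _).
Qed.
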